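(* Assume the setup in the context. Suppose $\{\mathcal{Z}_k\}_{k=1}^\infty$ is a sequence of compact subsets of $\mathcal{Z}$ with $P(\mathcal{Z}_k)\to1$ as $k\to\infty$, and suppose that for every $k\in\mathbb{N}$, every $j_1,j_2\in J$, and every $K\in\mathcal{K}_{j_1}$, $C\in\mathcal{K}_{j_2}$ with $K\cap C=\emptyset$, $$P\big(\{z\in\mathcal{Z}_k: V(T,z)=V(K,z)=V(C,z)\}\big)=0.$$ Then the argmin of $Q(t,z)$ over $t\in T$ is unique almost surely.
   Context: $z$ is an absolutely continuous random vector in $\mathbb{R}^{d_z}$ with distribution $P$, and $\mathcal{Z}\subset\mathbb{R}^{d_z}$ is measurable with $P(z\in\mathcal{Z})=1$. $T=\bigcup_{j\in J}T_j$ is a disjoint union of finitely or countably many second-countable Hausdorff manifolds, possibly with boundary or corner. $Q:T\times\mathcal{Z}\to\mathbb{R}$ is continuous on each $T_j\times\mathcal{Z}$. For $K\subset T$, $V(K,z)=\inf_{t\in K}Q(t,z)$. For each $j\in J$, $\mathcal{K}_j$ is a countable collection of compact neighborhoods in $T_j$ that separates points: for any $j_1,j_2\in J$ and any $t\in T_{j_1}$, $s\in T_{j_2}$ with $t\neq s$, there exist $K\in\mathcal{K}_{j_1}$ and $C\in\mathcal{K}_{j_2}$ with $K\cap C=\emptyset$, $t\in K$, $s\in C$. *)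

From HB Require Import structures.
From mathcomp Require Import all_boot all_order all_algebra.
From mathcomp Require Import all_classical all_reals all_analysis.
Set Implicit Arguments. Unset Strict Implicit. Unset Printing Implicit Defensive.
Import Order.TTheory GRing.Theory Num.Theory.
Import numFieldNormedType.Exports.
Local Open Scope classical_set_scope.
Local Open Scope ring_scope.

(* R^n is represented by row vectors 'rV[R]_n (with the matrix topology);
   [Rd R n] is the same carrier equipped with the Borel sigma-algebra,
   i.e. the sigma-algebra generated by the open sets. *)
Definition Rd (R : realType) (n : nat) := g_sigma_algebraType (@open 'rV[R]_n).

Definition box (R : realType) (n : nat) (a b : 'rV[R]_n) : set 'rV[R]_n :=
  [set x | forall i, a ord0 i <= x ord0 i <= b ord0 i].
Definition box_vol (R : realType) (n : nat) (a b : 'rV[R]_n) : R :=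
  \prod_(i < n) Num.max 0 (b ord0 i - a ord0 i).

Definition lebesgue_null (R : realType) (n : nat) (A : set 'rV[R]_n) : Prop :=
  forall eps : R, 0 < eps -> exists a b : nat -> 'rV[R]_n,
    A `<=` \bigcup_k box (a k) (b k) /\
    (\sum_(k <oo) (box_vol (a k) (b k))%:E <= eps%:E)%E.

Definition abs_continuous (R : realType) (n : nat)
    (P : probability (Rd R n) R) : Prop :=
  forall A : set (Rd R n), measurable A -> lebesgue_null (A : set 'rV[R]_n) ->
    P A = 0%E.

Definition quadrant (R : realType) (n : nat) : set 'rV[R]_n :=
  [set v | forall i, 0 <= v ord0 i].

(* topological manifold (of some dimension n), possibly with boundary or
   corners: every point has an open neighbourhood homeomorphic to a
   relatively open subset of [0,oo)^n.  (Boundaryless manifolds and manifolds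
   with boundary are special cases.) *)
Definition manifold_with_corners (R : realType) (T : topologicalType) : Prop :=
  exists n : nat, forall x : T,
    exists (U : set T) (f : T -> 'rV[R]_n) (g : 'rV[R]_n -> T),
      [/\ open U, U x, {within U, continuous f},
          (exists W : set 'rV[R]_n, open W /\ f @` U = W `&` @quadrant R n) &
          ((forall y, U y -> g (f y) = y) /\ {within f @` U, continuous g})].

Definition dunion (J : Type) (T : J -> Type) := {j : J & T j}.
Definition emb (J : Type) (T : J -> Type) (j : J) (K : set (T j)) : set (dunion T) :=
  [set existT T j t | t in K].

Definition Qu (R : realType) (dz : nat) (J : Type) (T : J -> Type)
  (Q : forall j, T j -> 'rV[R]_dz -> R) (p : dunion T) (z : 'rV[R]_dz) : R :=
  Q (projT1 p) (projT2 p) z.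
Definition Vinf (R : realType) (dz : nat) (J : Type) (T : J -> Type)
  (Q : forall j, T j -> 'rV[R]_dz -> R) (K : set (dunion T)) (z : 'rV[R]_dz)
  : \bar R := ereal_inf [set (Qu Q t z)%:E | t in K].

Definition is_argmin (R : realType) (dz : nat) (J : Type) (T : J -> Type)
  (Q : forall j, T j -> 'rV[R]_dz -> R) (z : 'rV[R]_dz) (t : dunion T) : Prop :=
  forall s : dunion T, Qu Q t z <= Qu Q s z.

From HB Require Import structures.
From mathcomp Require Import all_boot all_order all_algebra.
From mathcomp Require Import all_classical all_reals all_analysis.
Import Order.TTheory GRing.Theory Num.Theory.
Import numFieldNormedType.Exports.
Local Open Scope classical_set_scope.
Local Open Scope ring_scope.

(* If t <> s both minimise Q(., z), the separating families give disjoint K, C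
   with t in K and s in C, hence V(T, z) = V(K, z) = V(C, z).  So a non-unique
   argmin forces z outside every Z_k (a null set, as P(Z_k) -> 1) or into one
   of countably many null sets of the hypothesis. *)

Lemma negligible_bigcup_countable d (T : sigmaRingType d) (R : realFieldType)
    (mu : {measure set T -> \bar R}) (I : Type) (A : set I) (F : I -> set T) :
  countable A -> (forall i, A i -> mu.-negligible (F i)) ->
  mu.-negligible (\bigcup_(i in A) F i).
Proof.
move=> /countable_injP[f finj] negF.
apply: (@negligibleS _ _ _ mu (\bigcup_n \bigcup_(i in [set i | A i /\ f i = n]) F i)).
  by move=> x [i Ai Fx]; exists (f i) => //; exists i.
apply: negligible_bigcup => n.
have [[i0 [Ai0 fi0]]|nofiber] := pselect (exists i, A i /\ f i = n).
  apply: (negligibleS _ (negF _ Ai0)) => x [i [Ai fi] Fx].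
  by have -> : i0 = i by apply: finj; rewrite ?inE // fi0 fi.
apply: (negligibleS _ (negligible_set0 mu)) => x [i Ai _].
by apply: nofiber; exists i.
Qed.

Lemma ae_probability1 d (T : measurableType d) (R : realType)
    (P : probability T R) (A : set T) :
  measurable A -> P A = 1%E -> {ae P, forall x, A x}.
Proof.
move=> mA PA1; apply/negligibleP; first exact: measurableC.
by have := probability_setC P mA; rewrite PA1 subee.
Qed.

Lemma probability_bigcup_cvg1 d (T : measurableType d) (R : realType)
    (P : probability T R) (F : (set T)^nat) :
  (forall k, measurable (F k)) -> P (F k) @[k --> \oo] --> 1%E ->
  P (\bigcup_k F k) = 1%E.
Proof.
move=> mF PF1; have mUF : measurable (\bigcup_k F k) by exact: bigcupT_measurable.
apply/eqP; rewrite eq_le probability_le1 //= -(cvg_lim _ PF1) //.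
apply: lime_le; first exact: cvgP PF1.
by apply: nearW => k; apply: le_measure; rewrite ?inE // => x Fx; exists k.
Qed.

Lemma compact_measurable_open_sigma (T : ptopologicalType) (A : set T) :
  hausdorff_space T -> compact A ->
  measurable (A : set (g_sigma_algebraType (@open T))).
Proof.
move=> T_haus cptA; rewrite -[A]setCK; apply: measurableC.
by apply: sub_sigma_algebra; apply: closed_openC; exact: compact_closed.
Qed.

Section minimisers.
Variables (R : realType) (dz : nat) (J : Type) (T : J -> Type).
Variable Q : forall j, T j -> 'rV[R]_dz -> R.

Lemma Vinf_attained (S : set (dunion T)) z t :
  S t -> (forall u, S u -> Qu Q t z <= Qu Q u z) -> Vinf Q S z = (Qu Q t z)%:E.
Proof.
move=> St tmin; apply/eqP; rewrite eq_le; apply/andP; split.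
  by apply: ereal_inf_lbound; exists t.
by apply: le_ereal_inf_tmp => _ [u Su <-]; rewrite lee_fin; exact: tmin.
Qed.

Lemma argmin_tie_Vinf (S1 S2 : set (dunion T)) z t s :
  S1 t -> S2 s -> is_argmin Q z t -> is_argmin Q z s ->
  Vinf Q [set: dunion T] z = Vinf Q S1 z /\ Vinf Q S1 z = Vinf Q S2 z.
Proof.
move=> S1t S2s tmin smin.
have Qts : Qu Q t z = Qu Q s z by apply/eqP; rewrite eq_le tmin smin.
rewrite (@Vinf_attained setT z t I (fun u _ => tmin u)).
rewrite (@Vinf_attained S1 z t S1t (fun u _ => tmin u)).
by rewrite (@Vinf_attained S2 z s S2s (fun u _ => smin u)) Qts.
Qed.

End minimisers.

Theorem lemma2 (R : realType) (dz : nat)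
  (P : probability (Rd R dz) R) (P_ac : abs_continuous P)
  (Z : set 'rV[R]_dz) (mZ : measurable (Z : set (Rd R dz)))
  (PZ : P (Z : set (Rd R dz)) = 1%E)
  (J : countType) (T : J -> topologicalType)
  (T_haus : forall j, hausdorff_space (T j))
  (T_sc : forall j, @second_countable (T j))
  (T_mfd : forall j, manifold_with_corners R (T j))
  (Q : forall j, T j -> 'rV[R]_dz -> R)
  (Q_cont : forall j,
     {within [set: T j] `*` Z, continuous (fun p : T j * 'rV[R]_dz => Q j p.1 p.2)})
  (Kc : forall j, set (set (T j)))
  (Kc_count : forall j, countable (Kc j))
  (Kc_cpt_nbhs : forall j K, Kc j K -> compact K /\ exists x : T j, nbhs x K)
  (Kc_sep : forall (j1 j2 : J) (t : T j1) (s : T j2),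
     existT T j1 t <> existT T j2 s ->
     exists K C, [/\ Kc j1 K, Kc j2 C, @emb J (fun j => T j) j1 K `&` @emb J (fun j => T j) j2 C = set0, K t & C s])
  (Zk : nat -> set 'rV[R]_dz)
  (Zk_cpt : forall k, compact (Zk k))
  (Zk_sub : forall k, Zk k `<=` Z)
  (PZk : P (Zk k : set (Rd R dz)) @[k --> \oo] --> 1%E)
  (Hnull : forall (k : nat) (j1 j2 : J) (K : set (T j1)) (C : set (T j2)),
     Kc j1 K -> Kc j2 C -> @emb J (fun j => T j) j1 K `&` @emb J (fun j => T j) j2 C = set0 ->
     P.-negligible ([set z | Zk k z /\ Vinf Q [set: dunion (fun j => T j)] z = Vinf Q (@emb J (fun j => T j) j1 K) z
                                   /\ Vinf Q (@emb J (fun j => T j) j1 K) z = Vinf Q (@emb J (fun j => T j) j2 C) z]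
                    : set (Rd R dz))) :
  {ae P, forall z : Rd R dz, forall t s : dunion (fun j => T j),
     is_argmin Q z t -> is_argmin Q z s -> t = s}.
Proof.
pose E j := @emb J (fun j => T j) j.
pose tie k j1 j2 (K : set (T j1)) (C : set (T j2)) : set (Rd R dz) :=
  [set z | Zk k z /\ Vinf Q [set: dunion (fun j => T j)] z = Vinf Q (E j1 K) z
           /\ Vinf Q (E j1 K) z = Vinf Q (E j2 C) z].
have ties_negligible : P.-negligible (\bigcup_(k in [set: nat])
    \bigcup_(j1 in [set: J]) \bigcup_(j2 in [set: J]) \bigcup_(K in Kc j1)
    \bigcup_(C in [set C | Kc j2 C /\ E j1 K `&` E j2 C = set0]) tie k j1 j2 K C).
  apply: negligible_bigcup_countable => // k _.
  apply: negligible_bigcup_countable => // j1 _.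
  apply: negligible_bigcup_countable => // j2 _.
  apply: negligible_bigcup_countable => // K KcK.
  apply: negligible_bigcup_countable => [|C [KcC disjKC]]; last exact: Hnull.
  by apply: sub_countable (Kc_count j2); apply: subset_card_le => C [].
have mZk k : measurable (Zk k : set (Rd R dz)).
  by apply: compact_measurable_open_sigma => //; exact: norm_hausdorff.
have exhaust_Zk : {ae P, forall z : Rd R dz, (\bigcup_k Zk k) z}.
  apply: ae_probability1; first exact: bigcupT_measurable.
  exact: probability_bigcup_cvg1.
apply: (negligibleS _ (negligibleU exhaust_Zk ties_negligible)) => z /= non_unique.
have [[k _ Zkz]|] := pselect ((\bigcup_k Zk k) z); [right | by left].
move: non_unique => /existsNP[[j1 t] /existsNP[[j2 s] /not_implyP[tmin /not_implyP[smin nts]]]].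
have [K [C [KcK KcC disjKC Kt Cs]]] := Kc_sep _ _ _ _ nts.
exists k => //; exists j1 => //; exists j2 => //.
exists K => //; exists C => //; split => //.
by apply: argmin_tie_Vinf tmin smin; [exists t | exists s].
Qed.
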